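(* Let $A,B \in M_n(\mathbb{R}_+)$ be two triangularizable matrices. Then $A$ and $B$ are simultaneously triangularizable if and only if the union $G_A \cup G_B$ of their digraphs has no directed multi-vertex cycles.
   Context: Max algebra: $\mathbb{R}_+$ the nonnegative reals with $a\oplus b=\max\{a,b\}$ and ordinary multiplication. For $A,B\in M_n(\mathbb{R}_+)$, $(AB)_{ij}=\max_k a_{ik}b_{kj}$ and $(A\oplus B)_{ij}=\max\{a_{ij},b_{ij}\}$. $GL_n(\mathbb{R}_+)$ is the set of matrices invertible under this product (the generalized permutation matrices). $A$ is triangularizable if $P^{-1}AP$ is upper triangular for some $P\in GL_n(\mathbb{R}_+)$; $A,B$ are simultaneously triangularizable if there is one $P\in GL_n(\mathbb{R}_+)$ with both $P^{-1}AP$ and $P^{-1}BP$ upper triangular. The digraph $G_A$ has vertices $\{1,\dots,n\}$ and an edge $i\to j$ iff $a_{ij}>0$; $G_A\cup G_B$ has vertices $\{1,\dots,n\}$ and the union of the edge sets (it equals $G_{A\oplus B}$). A directed multi-vertex cycle is a directed simple cycle through at least two distinct vertices. *)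

From mathcomp Require Import all_boot all_order all_algebra.
Set Implicit Arguments. Unset Strict Implicit. Unset Printing Implicit Defensive.
Import Order.TTheory GRing.Theory Num.Theory.
Local Open Scope ring_scope.

Section MaxAlgebra.
Variables (R : realFieldType) (n : nat).

Definition nonneg_mx (A : 'M[R]_n) : Prop := forall i j, 0 <= A i j.

(* max-times product: (AB)_ij = max_k a_ik b_kj  (0 is the neutral element of
   max on R_+) *)
Definition maxmul (A B : 'M[R]_n) : 'M[R]_n :=
  \matrix_(i, j) \big[Num.max/0]_(k < n) (A i k * B k j).

Definition maxid : 'M[R]_n := 1%:M.

Definition maxGL (P : 'M[R]_n) : Prop :=
  nonneg_mx P /\ exists Q : 'M[R]_n,
    nonneg_mx Q /\ maxmul P Q = maxid /\ maxmul Q P = maxid.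

Definition upper_tri (A : 'M[R]_n) : Prop := forall i j : 'I_n, (j < i)%N -> A i j = 0.

Definition maxinv (P Q : 'M[R]_n) : Prop :=
  nonneg_mx P /\ nonneg_mx Q /\ maxmul P Q = maxid /\ maxmul Q P = maxid.

Definition triangularizable (A : 'M[R]_n) : Prop :=
  exists P Q, maxinv P Q /\ upper_tri (maxmul (maxmul Q A) P).

Definition simul_triangularizable (A B : 'M[R]_n) : Prop :=
  exists P Q, maxinv P Q /\ upper_tri (maxmul (maxmul Q A) P)
                         /\ upper_tri (maxmul (maxmul Q B) P).

Definition digraph (A : 'M[R]_n) : rel 'I_n := fun i j => 0 < A i j.

Definition digraph_union (A B : 'M[R]_n) : rel 'I_n :=
  fun i j => digraph A i j || digraph B i j.

Definition has_multivertex_cycle (e : rel 'I_n) : Prop :=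
  exists c : seq 'I_n, (2 <= size c)%N /\ cycle e c /\ uniq c.

End MaxAlgebra.

(** A max-inverse pair [P, Q] is a generalized permutation: for each [k]
    there is a [pivot k] with [P k (pivot k) > 0] and [Q (pivot k) k > 0], and
    [pivot] is injective.  An edge [k -> l] of [G_X] makes the entry
    [(pivot k, pivot l)] of [Q X P] positive, so if [Q X P] is upper
    triangular then [pivot] is monotone along the edges of [G_X].  An
    injective map that is monotone along all edges of [G_A U G_B] cannot go
    around a multi-vertex cycle.
    Conversely, without such cycles the number of ancestors of a vertex
    strictly increases along every non-loop edge; ordering the vertices by it
    (ties broken by index) gives a topological numbering [s], and conjugating
    by the permutation matrix of [s], which in max algebra still just permutes
    rows and columns, makes both [A] and [B] upper triangular. *)

From mathcomp Require Import all_boot all_order all_algebra.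
From mathcomp Require Import perm zify.
Set Implicit Arguments. Unset Strict Implicit. Unset Printing Implicit Defensive.
Import Order.TTheory GRing.Theory Num.Theory.

Section MaxProduct.
Local Open Scope ring_scope.
Variables (R : realFieldType) (n : nat).
Implicit Types (X Y : 'M[R]_n) (s : 'S_n).

Lemma maxmulE X Y i j :
  maxmul X Y i j = \big[Num.max/0]_(k < n) (X i k * Y k j).
Proof. by rewrite mxE. Qed.

Lemma maxmul_id_supp X Y i l j :
  maxmul X Y = maxid R n -> 0 < X i l -> 0 < Y l j -> i = j.
Proof.
move=> XY Xil Ylj; apply/eqP; apply: contraTT (mulr_gt0 Xil Ylj) => ij.
have := le_bigmax 0 (fun k => X i k * Y k j) l.
by rewrite -maxmulE XY mxE (negPf ij) -leNgt.
Qed.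

Lemma bigmax_supp1 (I : finType) (F : I -> R) i0 :
  0 <= F i0 -> (forall i, i != i0 -> F i = 0) ->
  \big[Num.max/0]_i F i = F i0.
Proof.
move=> F0 Fsupp; rewrite (bigmaxD1 i0) // bigmax_eq_id ?max_l // => i.
by move=> /Fsupp->.
Qed.

Lemma perm_mxE s i j : perm_mx s i j = (s i == j)%:R :> R.
Proof. by rewrite !mxE. Qed.

Lemma maxmul_perm_mxl s X : nonneg_mx X -> maxmul (perm_mx s) X = row_perm s X.
Proof.
move=> nnX; apply/matrixP => i j; rewrite maxmulE (bigmax_supp1 (i0 := s i)).
- by rewrite perm_mxE eqxx mul1r mxE.
- by rewrite perm_mxE eqxx mul1r.
by move=> k; rewrite perm_mxE eq_sym => /negPf->; rewrite mul0r.
Qed.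

Lemma maxmul_perm_mxr s X : nonneg_mx X -> maxmul X (perm_mx s) = col_perm s^-1%g X.
Proof.
move=> nnX; apply/matrixP => i j; rewrite maxmulE (bigmax_supp1 (i0 := s^-1%g j)).
- by rewrite perm_mxE permKV eqxx mulr1 mxE.
- by rewrite perm_mxE permKV eqxx mulr1.
by move=> k; rewrite perm_mxE (canF_eq (permK s)) => /negPf->; rewrite mulr0.
Qed.

Lemma maxinv_perm_mx s : maxinv (perm_mx s : 'M[R]_n) (perm_mx s^-1%g).
Proof.
have nn_perm t : nonneg_mx (perm_mx t : 'M[R]_n) by move=> i j; rewrite perm_mxE ler0n.
do 3 split=> //.
  by rewrite maxmul_perm_mxl // /perm_mx -row_permM mulgV row_perm1.
by rewrite maxmul_perm_mxl // /perm_mx -row_permM mulVg row_perm1.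
Qed.

Lemma upper_tri_perm_conj s X : nonneg_mx X ->
  (forall k l, 0 < X k l -> k != l -> (s k < s l)%N) ->
  upper_tri (maxmul (maxmul (perm_mx s^-1%g) X) (perm_mx s)).
Proof.
move=> nnX s_mono i j ji.
have nn_rows : nonneg_mx (row_perm s^-1%g X) by move=> a b; rewrite mxE.
rewrite maxmul_perm_mxl // maxmul_perm_mxr // !mxE.
have ij : s^-1%g i != s^-1%g j by rewrite (inj_eq perm_inj) neq_ltn ji orbT.
apply/eqP; rewrite eq_le nnX andbT leNgt; apply/negP => /s_mono/(_ ij).
by rewrite !permKV ltnNge (ltnW ji).
Qed.

End MaxProduct.

Section MaxInverse.
Local Open Scope ring_scope.
Variables (R : realFieldType) (n : nat) (P Q : 'M[R]_n).
Hypothesis PQ : maxinv P Q.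

Let nnP : nonneg_mx P. Proof. by case: PQ. Qed.
Let nnQ : nonneg_mx Q. Proof. by case: PQ => _ []. Qed.
Let PQ1 : maxmul P Q = maxid R n. Proof. by case: PQ => _ [_ []]. Qed.
Let QP1 : maxmul Q P = maxid R n. Proof. by case: PQ => _ [_ []]. Qed.

Lemma maxinv_diag_supp k : exists2 m, 0 < P k m & 0 < Q m k.
Proof.
have PQ_ge0 m : 0 <= P k m * Q m k by rewrite mulr_ge0.
have [m _ PQkk] :=
  eq_bigmax k xpredT (fun m => P k m * Q m k) isT (fun m _ => PQ_ge0 m).
have : 0 < P k m * Q m k by rewrite -PQkk -maxmulE PQ1 mxE eqxx ltr01.
by rewrite mulr_ge0_gt0 // => /andP[]; exists m.
Qed.

Definition pivot k : 'I_n := odflt k [pick m | 0 < Q m k].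

Lemma pivot_supp k : 0 < P k (pivot k) /\ 0 < Q (pivot k) k.
Proof.
have [m Pkm Qmk] := maxinv_diag_supp k.
rewrite /pivot; case: pickP => [m' /= Qm'k | /(_ m) /=]; last by rewrite Qmk.
by rewrite (maxmul_id_supp QP1 Qm'k Pkm).
Qed.

Lemma pivot_inj : injective pivot.
Proof.
move=> k l kl; have [Pk _] := pivot_supp k; have [_ Ql] := pivot_supp l.
by rewrite kl in Pk; apply: maxmul_id_supp PQ1 Pk Ql.
Qed.

Lemma pivot_homo_upper_tri X : upper_tri (maxmul (maxmul Q X) P) ->
  {homo pivot : k l / 0 < X k l >-> (k <= l)%N}.
Proof.
move=> triX k l Xkl; rewrite leqNgt; apply/negP => /triX; apply/eqP.
have [_ Qk] := pivot_supp k; have [Pl _] := pivot_supp l.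
rewrite gt_eqF // maxmulE; apply: lt_le_trans (le_bigmax 0 _ l).
rewrite mulr_gt0 // maxmulE; apply: lt_le_trans (le_bigmax 0 _ k).
exact: mulr_gt0.
Qed.

End MaxInverse.

Lemma monotone_inj_no_multivertex_cycle n (e : rel 'I_n) (f : 'I_n -> nat) :
  injective f -> {homo f : x y / e x y >-> x <= y} ->
  ~ has_multivertex_cycle e.
Proof.
move=> f_inj f_homo [[|x [|y c]] [//= _ [/andP[exy ey_x] /andP[x_notin _]]]].
have le_trans_f : transitive (relpre f leq) by move=> a b d /leq_trans; apply.
have /(order_path_min le_trans_f)/allP/(_ x) : path (relpre f leq) y (rcons c x).
  exact: sub_path ey_x.
rewrite mem_rcons mem_head => /(_ isT) /= fyx.
have /f_inj xy : f x = f y by apply/eqP; rewrite eqn_leq f_homo.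
by move: x_notin; rewrite xy mem_head.
Qed.

Section RankBy.
Variables (n : nat) (f : 'I_n -> nat).

Definition rank_by k := #|[set j | f j < f k]|.

Lemma rank_by_lt k : rank_by k < n.
Proof.
rewrite -[n]card_ord -cardsT; apply: proper_card; rewrite properT.
by apply/negP => /eqP/setP/(_ k); rewrite !inE ltnn.
Qed.

Lemma rank_by_homo : {homo rank_by : k l / f k < f l >-> k < l}.
Proof.
move=> k l fkl; apply: proper_card; apply/properP; split.
  by apply/subsetP => j; rewrite !inE => /ltn_trans; apply.
by exists k; rewrite !inE ?ltnn.
Qed.

Definition rank_ord k : 'I_n := Ordinal (rank_by_lt k).

Lemma rank_ord_inj : injective f -> injective rank_ord.
Proof.
move=> f_inj k l /(congr1 val) /= kl.
by case: (ltngtP (f k) (f l)) => [/rank_by_homo|/rank_by_homo|/f_inj];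
  rewrite ?kl ?ltnn.
Qed.

End RankBy.

Section TopologicalNumbering.
Variables (n : nat) (e : rel 'I_n).
Hypothesis acyclic : ~ has_multivertex_cycle e.

Lemma acyclic_connect_edge k l : connect e l k -> e k l -> k = l.
Proof.
move=> /connectP[p pth ->]; case: (shortenP pth) => p' pth' uniq' _ ekl.
case: p' => [//|m p'] in pth' uniq' ekl *; exfalso; apply: acyclic.
by exists [:: l, m & p']; rewrite /cycle rcons_path pth'.
Qed.

Definition n_ancestors k := #|[set j | connect e j k]|.

Lemma n_ancestors_lt k l : e k l -> k != l -> n_ancestors k < n_ancestors l.
Proof.
move=> ekl kl; apply: proper_card; apply/properP; split.
  by apply/subsetP => j; rewrite !inE => /connect_trans; apply; apply: connect1.
exists l; rewrite !inE ?connect0 //.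
by apply: contra_neqN kl => /acyclic_connect_edge; apply.
Qed.

Definition topo_key k := n_ancestors k * n + k.

Lemma topo_key_inj : injective topo_key.
Proof.
move=> k l /(congr1 (modn^~ n)); rewrite /topo_key !modnMDl !modn_small //.
exact: val_inj.
Qed.

Lemma topo_key_lt k l : e k l -> k != l -> topo_key k < topo_key l.
Proof.
move=> /n_ancestors_lt lt_kl /lt_kl; rewrite /topo_key.
have := ltn_ord k; have := ltn_ord l; nia.
Qed.

Definition topo_perm : 'S_n := perm (rank_ord_inj topo_key_inj).

Lemma topo_perm_lt k l : e k l -> k != l -> topo_perm k < topo_perm l.
Proof. by move=> ekl kl; rewrite !permE rank_by_homo ?topo_key_lt. Qed.

End TopologicalNumbering.

Theorem theorem3p3 (R : realFieldType) (n : nat) (A B : 'M[R]_n) :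
  nonneg_mx A -> nonneg_mx B ->
  triangularizable A -> triangularizable B ->
  (simul_triangularizable A B <-> ~ has_multivertex_cycle (digraph_union A B)).
Proof.
move=> nnA nnB _ _; split.
  case=> P [Q [PQ [triA triB]]].
  apply: (@monotone_inj_no_multivertex_cycle _ _ (val \o pivot Q)).
    exact: inj_comp val_inj (pivot_inj PQ).
  by move=> k l /orP[/(pivot_homo_upper_tri PQ triA)
                    | /(pivot_homo_upper_tri PQ triB)].
move=> acyclic; set s := topo_perm (digraph_union A B).
have union_lt X : subrel (digraph X) (digraph_union A B) ->
    forall k l, (0 < X k l)%R -> k != l -> s k < s l.
  by move=> sub k l /sub; apply: topo_perm_lt.
exists (perm_mx s), (perm_mx s^-1%g); split; first exact: maxinv_perm_mx.
split; apply: upper_tri_perm_conj => //; apply: union_lt => k l Xkl;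
  by rewrite /digraph_union Xkl ?orbT.
Qed.
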